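(* Let $K\in\{\mathbb R,\mathbb C,\mathbb H\}$ and let $(E,d)$ be a metric vector space over $K$ such that $d$ is $C_0$-translation invariant and $(C_1,C_2,C_3)$-lipschitz multiplicative. Let $d_0(x,y)=\int_{\mathbb U}d(ux,uy)\,d\mu(u)$, $\delta(x,y)=\lim_{n\to\infty}\frac1n d(nx,ny)$ and $\delta_0(x,y)=\lim_{n\to\infty}\frac1n d_0(nx,ny)$. Then $\delta$ and $\delta_0$ are $C_0$-translation invariant.
   Context: A metric vector space is a topological vector space over $K$ whose topology is generated by the metric $d$. $\mathbb U=\{u\in K:|u|=1\}$, $\mu$ the right-invariant Haar probability measure on $\mathbb U$. A function $\rho$ on $E\times E$ is $C_0$-translation invariant if $\rho(x+z,y+z)\le \rho(x,y)+C_0$ for all $x,y,z$. $(C_1,C_2,C_3)$-lipschitz multiplicative ($C_1\ge1$, $C_2,C_3\ge0$) means $C_1^{-1}|\lambda|d(x,y)-C_2|\lambda|-C_3\le d(\lambda x,\lambda y)\le C_1|\lambda|d(x,y)+C_2|\lambda|+C_3$ for all $\lambda\in K$, $x,y\in E$. (Under these hypotheses the limits defining $\delta,\delta_0$ exist.) *)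

From HB Require Import structures.
From mathcomp Require Import all_boot all_order all_algebra all_field.
From mathcomp Require Import all_classical all_reals all_analysis.
Set Implicit Arguments. Unset Strict Implicit. Unset Printing Implicit Defensive.
Import Order.TTheory GRing.Theory Num.Theory numFieldNormedType.Exports.
Local Open Scope ring_scope.
Local Open Scope classical_set_scope.

(* The scalar division algebra K.  K is a finite-dimensional associative   *)
(* unital algebra over the reals R ('falgType R') in which every nonzero   *)
(* element is invertible, equipped with an absolute value nK extending the *)
(* absolute value of R.  By Frobenius' theorem (and uniqueness of the      *)
(* absolute value) these are exactly R, C and H with their usual modulus.  *)
Definition is_division_algebra (R : realType) (K : falgType R) : Prop :=
  forall x : K, x != 0 -> x \is a GRing.unit.

Definition is_absolute_value (R : realType) (K : falgType R) (nK : K -> R) : Prop :=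
  [/\ forall x, 0 <= nK x,
      forall x, nK x = 0 <-> x = 0,
      forall x y, nK (x * y) = nK x * nK y,
      forall x y, nK (x + y) <= nK x + nK y
    & forall (a : R) x, nK (a *: x) = `|a| * nK x].

Definition unit_sphere (R : realType) (K : falgType R) (nK : K -> R) : set K :=
  [set u | nK u = 1].

(* K as a pointed type (point 0), needed to build the generated sigma-algebra *)
Definition Kpt (R : realType) (K : falgType R) : Type := K.
HB.instance Definition _ (R : realType) (K : falgType R) := Choice.on (Kpt K).
HB.instance Definition _ (R : realType) (K : falgType R) :=
  isPointed.Build (Kpt K) (0 : K).

Definition K_open (R : realType) (K : falgType R) (nK : K -> R) : set (set (Kpt K)) :=
  [set A | forall a : K, A a -> exists e : R, 0 < e /\ forall b : K, nK (b - a) < e -> A b].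

Notation K_borel nK := (g_sigma_algebraType (K_open nK)).

(* mu is the right-invariant Haar probability measure on U, viewed as a    *)
(* Borel probability measure on K concentrated on U.                       *)
Definition is_right_haar_on_U (R : realType) (K : falgType R) (nK : K -> R)
    (mu : probability (K_borel nK) R) : Prop :=
  mu (unit_sphere nK) = 1%E /\
  forall u : K, unit_sphere nK u ->
    forall A : set (K_borel nK), measurable A ->
      mu ((fun v : K_borel nK => ((v : K) * u : K) : K_borel nK) @^-1` A) = mu A.

Definition is_metric (T : Type) (R : realType) (d : T -> T -> R) : Prop :=
  [/\ forall x y, 0 <= d x y,
      forall x y, d x y = 0 <-> x = y,
      forall x y, d x y = d y x
    & forall x y z, d x z <= d x y + d y z].

Definition metric_vector_space (R : realType) (K : falgType R) (nK : K -> R)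
    (E : lmodType K) (d : E -> E -> R) : Prop :=
  [/\ is_metric d,
      forall (x y : E) (e : R), 0 < e -> exists r : R, 0 < r /\
        forall x' y', d x x' < r -> d y y' < r -> d (x + y) (x' + y') < e
    & forall (a : K) (x : E) (e : R), 0 < e -> exists r : R, 0 < r /\
        forall a' x', nK (a - a') < r -> d x x' < r -> d (a *: x) (a' *: x') < e].

Definition translation_invariant (R : realType) (K : falgType R) (E : lmodType K)
    (C0 : R) (rho : E -> E -> R) : Prop :=
  forall x y z : E, rho (x + z) (y + z) <= rho x y + C0.

Definition lipschitz_multiplicative (R : realType) (K : falgType R) (nK : K -> R)
    (E : lmodType K) (C1 C2 C3 : R) (d : E -> E -> R) : Prop :=
  [/\ 1 <= C1, 0 <= C2, 0 <= C3 &
      forall (l : K) (x y : E),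
        C1^-1 * nK l * d x y - C2 * nK l - C3 <= d (l *: x) (l *: y) /\
        d (l *: x) (l *: y) <= C1 * nK l * d x y + C2 * nK l + C3].

Definition d0 (R : realType) (K : falgType R) (nK : K -> R)
    (mu : probability (K_borel nK) R) (E : lmodType K) (d : E -> E -> R)
    (x y : E) : R :=
  fine (\int[mu]_(u in unit_sphere nK) (d ((u : K) *: x) ((u : K) *: y))%:E)%E.

Definition homogenization (R : realType) (K : falgType R) (E : lmodType K)
    (rho : E -> E -> R) (x y : E) : R :=
  limn (fun n : nat => rho (x *+ n) (y *+ n) / n%:R).

From HB Require Import structures.
From mathcomp Require Import all_boot all_order all_algebra all_field.
From mathcomp Require Import all_classical all_reals all_analysis.
From mathcomp Require Import lra measurable_realfun.
Import Order.TTheory GRing.Theory Num.Theory numFieldNormedType.Exports.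
Local Open Scope ring_scope.
Local Open Scope classical_set_scope.

(* The limits defining delta and delta0 exist by Fekete's lemma: if rho is
   nonnegative, satisfies the triangle inequality and is C0-translation
   invariant, then n |-> rho(nx, ny) is subadditive up to the constant 2 C0.
   Once the limits exist, dividing rho(nx + nz, ny + nz) <= rho(nx, ny) + C0
   by n and letting n -> oo gives the invariance of the homogenization.
   For delta0 it remains to see that d0 inherits the three properties from d:
   u |-> d(ux, uy) is continuous, hence Borel, and bounded on U by lipschitz
   multiplicativity, so it is integrable, and the pointwise inequalities
   integrate against the probability mu, which gives U full mass. *)

Section Fekete.
Variable R : realType.
Implicit Types (a b : nat -> R) (c : R).

Lemma cvgn_div_natr c : (c / n%:R) @[n --> \oo] --> 0.
Proof.
have inv0 : (n%:R^-1 : R) @[n --> \oo] --> 0.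
  by apply/gtr0_cvgV0; [exact: nbhs_infty_gtr|exact: cvgr_idn].
by rewrite -(mulr0 c); apply: cvgM => //; exact: cvg_cst.
Qed.

Lemma subadditive_iter {b m} : (forall k, b (m + k)%N <= b m + b k) ->
  forall q r, b (q * m + r)%N <= q%:R * b m + b r.
Proof.
move=> bS; elim=> [|q IH] r; first by rewrite mul0n add0n mul0r add0r.
rewrite mulSn -addnA (le_trans (bS _)) // mulrSr mulrDl mul1r.
by move: (IH r); lra.
Qed.

Lemma subadditive_div_le {b m n} : (0 < m)%N -> (0 < n)%N ->
  (forall k, 0 <= b k) -> (forall k l, b (k + l)%N <= b k + b l) ->
  b n / n%:R <= b m / m%:R + (\sum_(r < m) b r) / n%:R.
Proof.
move=> m0 n0 b0 bS; have n0R : 0 < n%:R :> R by rewrite ltr0n.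
rewrite ler_pdivrMr // mulrDl divfK ?gt_eqF //.
have := subadditive_iter (bS m) (n %/ m) (n %% m); rewrite -divn_eq => /le_trans.
apply; apply: lerD.
  rewrite -mulrA [leRHS]mulrC ler_wpM2r // mulrC.
  by rewrite ler_pdivlMr ?ltr0n // -natrM ler_nat leq_divM.
have rm := ltn_pmod n m0.
by rewrite (bigD1 (Ordinal rm)) //= lerDl sumr_ge0.
Qed.

Lemma subadditive_cvgn {b} : (forall n, 0 <= b n) ->
  (forall m n, b (m + n)%N <= b m + b n) -> cvgn (fun n => b n / n%:R).
Proof.
move=> b0 bS.
pose S := [set b n / n%:R | n in [set n | (0 < n)%N]].
have S0 : has_inf S.
  split; first by exists (b 1%N / 1%:R), 1%N.
  by exists 0 => _ [n _ <-]; rewrite divr_ge0.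
apply/cvg_ex; exists (inf S); apply/cvgrPdist_lt => e e0.
have [_ [m m0 <-] bm] := inf_adherent (divr_gt0 e0 (ltr0n R 2)) S0.
pose B := \sum_(r < m) b r.
near=> n.
have n0 : (0 < n)%N by near: n; exists 1%N.
have infS : inf S <= b n / n%:R by apply: ge_inf; [case: S0|exists n].
have Bn : B / n%:R < e / 2.
  by near: n; apply: cvgr_lt; [exact: cvgn_div_natr|exact: divr_gt0].
have := subadditive_div_le m0 n0 b0 bS; rewrite -/B.
rewrite distrC ger0_norm ?subr_ge0 //; lra.
Unshelve. all: by end_near.
Qed.

Lemma quasi_subadditive_cvgn {a c} : (forall n, 0 <= a n) -> 0 <= c ->
  (forall m n, a (m + n)%N <= a m + a n + c) -> cvgn (fun n => a n / n%:R).
Proof.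
move=> a0 c0 aS.
have acS m n : a (m + n)%N + c <= (a m + c) + (a n + c) by move: (aS m n); lra.
have acvg := subadditive_cvgn (fun n => addr_ge0 (a0 n) c0) acS.
have -> : (fun n => a n / n%:R) = (fun n => (a n + c) / n%:R - c / n%:R).
  by apply/funext => n; rewrite mulrDl addrK.
by apply: is_cvgB => //; apply/cvg_ex; exists 0; exact: cvgn_div_natr.
Qed.

End Fekete.

Section Homogenization.
Context {R : realType} {K : falgType R} {E : lmodType K} {C0 : R}.
Context {rho : E -> E -> R}.
Hypothesis rho_ge0 : forall x y, 0 <= rho x y.
Hypothesis rho_triangle : forall x y z, rho x z <= rho x y + rho y z.
Hypothesis rho_ti : translation_invariant C0 rho.

Lemma translation_invariant_ge0 : 0 <= C0.
Proof. by have := rho_ti 0 0 0; rewrite !addr0; lra. Qed.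

Lemma homogenization_cvgn x y : cvgn (fun n => rho (x *+ n) (y *+ n) / n%:R).
Proof.
apply: (@quasi_subadditive_cvgn _ _ (C0 + C0)) => // [|m n].
  by rewrite addr_ge0 // translation_invariant_ge0.
rewrite !mulrnDr.
have := rho_triangle (x *+ m + x *+ n) (y *+ m + x *+ n) (y *+ m + y *+ n).
have := rho_ti (x *+ m) (y *+ m) (x *+ n).
have := rho_ti (x *+ n) (y *+ n) (y *+ m).
rewrite ![_ *+ n + y *+ m]addrC; lra.
Qed.

Lemma homogenization_translation_invariant :
  translation_invariant C0 (homogenization rho).
Proof.
move=> x y z; rewrite /homogenization.
have cvg_xy := homogenization_cvgn x y.
rewrite -(cvg_lim _ (cvgD cvg_xy (cvg_cst C0))) //.
apply: ler_lim; [exact: homogenization_cvgn|exact: (is_cvgD cvg_xy (is_cvg_cst _))|].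
near=> n.
have n1 : (1 <= n)%N by near: n; exists 1%N.
have n0 : 0 < n%:R :> R by rewrite ltr0n.
rewrite !mulrnDl ler_pdivrMr // mulrDl divfK ?gt_eqF //.
apply: le_trans (rho_ti _ _ _) _.
by rewrite lerD2l ler_peMr ?translation_invariant_ge0 // ler1n.
Unshelve. all: by end_near.
Qed.

End Homogenization.

Lemma metric_distB_le {T : Type} {R : realType} {d : T -> T -> R} :
  is_metric d -> forall x y x' y', `|d x' y' - d x y| <= d x x' + d y y'.
Proof.
case=> _ _ dC dtri x y x' y'.
have := dtri x' x y'; have := dtri x y y'; have := dtri x x' y; have := dtri x' y' y.
rewrite [d x' x]dC [d y' y]dC => *.
by rewrite ler_norml; apply/andP; split; lra.
Qed.

Lemma le_RintegralD d (T : measurableType d) (R : realType)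
    (mu : {measure set T -> \bar R}) (D : set T) (f g h : T -> R) :
  measurable D -> mu.-integrable D (EFin \o f) ->
  mu.-integrable D (EFin \o g) -> mu.-integrable D (EFin \o h) ->
  (forall x, D x -> f x <= g x + h x) ->
  \int[mu]_(x in D) f x <= \int[mu]_(x in D) g x + \int[mu]_(x in D) h x.
Proof.
move=> mD intf intg inth fgh; rewrite -RintegralD //.
by apply: le_Rintegral => //; exact: (integrableD mD intg inth).
Qed.

Definition K_continuous {R : realType} {K : falgType R} (nK : K -> R)
    (f : K -> R) : Prop :=
  forall a e, 0 < e ->
  exists2 r, 0 < r & forall b, nK (b - a) < r -> `|f b - f a| < e.

Section ContinuousOnK.
Context {R : realType} {K : falgType R} {nK : K -> R}.
Hypothesis habs : is_absolute_value nK.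

Lemma absK_N x : nK (- x) = nK x.
Proof.
by case: habs => _ _ _ _ nKZ; rewrite -scaleN1r nKZ normrN normr1 mul1r.
Qed.

Lemma absK_continuous : K_continuous nK nK.
Proof.
case: habs => _ _ _ nK_tri _ a e e0; exists e => // b ab.
have := nK_tri (b - a) a; have := nK_tri (a - b) b.
rewrite !subrK -opprB absK_N => *.
by rewrite ltr_norml; apply/andP; split; lra.
Qed.

Lemma K_continuous_measurable {f : K_borel nK -> R} :
  K_continuous nK f -> measurable_fun setT f.
Proof.
move=> fC; apply: (measurability _ (RGenOInfty.measurableE R)) => //.
move=> _ [_ [c ->] <-]; rewrite setTI; apply: sub_sigma_algebra => a /=.
rewrite !in_itv /= !andbT => ca.
have [r r0 fr] := fC a (f a - c) (ltac:(by rewrite subr_gt0)).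
exists r; split => // b /fr; rewrite ltr_norml in_itv /= andbT => /andP[fb _]; lra.
Qed.

Lemma measurable_unit_sphere : measurable (unit_sphere nK : set (K_borel nK)).
Proof.
have := K_continuous_measurable absK_continuous measurableT _ (measurable_set1 1).
by rewrite setTI.
Qed.

Lemma scale_dist_continuous {E : lmodType K} {d : E -> E -> R} x y :
  metric_vector_space nK d -> K_continuous nK (fun u => d (u *: x) (u *: y)).
Proof.
case=> dmetric _ scaleC a e e0.
have d_refl z : d z z = 0 by case: dmetric => _ d0 _ _; exact/d0.
have [rx [rx0 Crx]] := scaleC a x _ (divr_gt0 e0 (ltr0n R 2)).
have [ry [ry0 Cry]] := scaleC a y _ (divr_gt0 e0 (ltr0n R 2)).
exists (Num.min rx ry) => [|b]; first by rewrite lt_min rx0 ry0.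
rewrite lt_min -opprB absK_N => /andP[brx bry].
apply: le_lt_trans (metric_distB_le dmetric _ _ _ _) _.
have := Crx b x brx; have := Cry b y bry; rewrite !d_refl; lra.
Qed.

End ContinuousOnK.

Section AveragedMetric.
Context {R : realType} {K : falgType R} {nK : K -> R}.
Hypothesis habs : is_absolute_value nK.
Let U : set (K_borel nK) := unit_sphere nK.
Let mU : measurable U := measurable_unit_sphere habs.

Context {mu : probability (K_borel nK) R}.
Hypothesis mu_U : mu U = 1%E.
Context {E : lmodType K} {d : E -> E -> R} {C0 C1 C2 C3 : R}.
Hypothesis hE : metric_vector_space nK d.
Hypothesis hlip : lipschitz_multiplicative nK C1 C2 C3 d.

Lemma scale_dist_le x y (u : K) : nK u = 1 ->
  d (u *: x) (u *: y) <= C1 * d x y + C2 + C3.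
Proof. by case: hlip => _ _ _ /(_ u x y) [_]; move=> + u1; rewrite u1 !mulr1. Qed.

Lemma integrable_scale_dist x y :
  mu.-integrable U (EFin \o fun u : K_borel nK => d ((u : K) *: x) ((u : K) *: y)).
Proof.
have [[d_ge0 _ _ _] _ _] := hE.
apply: measurable_bounded_integrable => //.
- exact: le_lt_trans (probability_le1 mu mU) (ltry 1).
- apply: measurable_funTS.
  exact: K_continuous_measurable (scale_dist_continuous habs x y hE).
exists (C1 * d x y + C2 + C3); split; first exact: num_real.
move=> M /ltW + u Uu; apply: le_trans.
by rewrite ger0_norm //; exact: scale_dist_le.
Qed.

Lemma integrable_cst (c : R) : mu.-integrable U (EFin \o cst c).
Proof. exact: finite_measure_integrable_cst. Qed.

Lemma d0_ge0 x y : 0 <= d0 mu d x y.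
Proof. by have [[d_ge0 _ _ _] _ _] := hE; apply: Rintegral_ge0. Qed.

Lemma d0_triangle x y z : d0 mu d x z <= d0 mu d x y + d0 mu d y z.
Proof.
have [[_ _ _ d_tri] _ _] := hE.
by apply: le_RintegralD => //; exact: integrable_scale_dist.
Qed.

Lemma d0_translation_invariant :
  translation_invariant C0 d -> translation_invariant C0 (d0 mu d).
Proof.
move=> hC0 x y z.
have intC0 : \int[mu]_(u in U) C0 = C0.
  by rewrite Rintegral_cst // (_ : fine (mu U) = 1) ?mulr1 // mu_U.
rewrite -[in leRHS]intC0.
apply: le_RintegralD => // [|||u _]; [exact: integrable_scale_dist..|exact: integrable_cst|].
by rewrite !scalerDr; exact: hC0.
Qed.

End AveragedMetric.

Theorem lemma3 (R : realType) (K : falgType R) (nK : K -> R)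
    (hdiv : is_division_algebra K) (habs : is_absolute_value nK)
    (mu : probability (K_borel nK) R) (hmu : is_right_haar_on_U mu)
    (E : lmodType K) (d : E -> E -> R) (C0 C1 C2 C3 : R)
    (hE : metric_vector_space nK d)
    (hC0 : translation_invariant C0 d)
    (hlip : lipschitz_multiplicative nK C1 C2 C3 d) :
  translation_invariant C0 (homogenization d) /\
  translation_invariant C0 (homogenization (d0 mu d)).
Proof.
have [[d_ge0 _ _ d_tri] _ _] := hE.
split; first exact: homogenization_translation_invariant d_ge0 d_tri hC0.
apply: homogenization_translation_invariant.
- exact: d0_ge0 hE.
- exact: (d0_triangle (mu := mu) habs hE hlip).
- exact: (d0_translation_invariant habs hmu.1 hE hlip hC0).
Qed.
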